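(* Let $p$ be a prime and $b$ an integer with $0<b\le b^{-1}<p$. Write $p=bq+r$ with $0\le r<b$ and $p=b^{-1}s+t$ with $0\le t<b^{-1}$ (division algorithm). Then $\mathrm{inv}_{1,b}$ contains $$\{x_1^{p-kb}x_2^k\mid 0\le k\le q\}\cup\{x_1^mx_2^{p-mb^{-1}}\mid 0\le m\le s\}.$$
   Context: Let $S=\mathbb{C}[x_1,x_2]$, $\zeta=e^{2\pi i/p}$, $G=\mathbb{Z}/p\mathbb{Z}=\langle\zeta\rangle$ acting on $S$ by $x_1\mapsto\zeta x_1$, $x_2\mapsto\zeta^bx_2$. $S^G_{1,b}$ is the invariant ring; a monomial $x_1^cx_2^d$ lies in it iff $c+bd\equiv0\pmod p$. $\mathrm{inv}_{1,b}$ denotes the minimal set of monomial generators of $S^G_{1,b}$ as a $\mathbb{C}$-algebra: the nonconstant invariant monomials that are not a product of two nonconstant invariant monomials. $b^{-1}$ is the unique integer $0<b^{-1}<p$ with $bb^{-1}\equiv1\pmod p$. *)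

From mathcomp Require Import all_boot.
Set Implicit Arguments. Unset Strict Implicit. Unset Printing Implicit Defensive.

(* A monomial x1^c x2^d of S = C[x1,x2] is represented by its exponent
   pair (c, d) : nat * nat; multiplying monomials adds exponent pairs. *)
Definition monomial := (nat * nat)%type.

Definition mon_mul (e f : monomial) : monomial := (e.1 + f.1, e.2 + f.2).

(* x1^c x2^d is invariant under Z/p acting by x1 -> z x1, x2 -> z^b x2
   iff c + b d = 0 (mod p). *)
Definition invariant_mon (p b : nat) (e : monomial) : bool :=
  (e.1 + b * e.2) %% p == 0.

Definition nonconstant (e : monomial) : bool := e != (0, 0).

Definition in_inv (p b : nat) (e : monomial) : Prop :=
  [/\ invariant_mon p b e, nonconstant e &
      ~ exists f g : monomial,
          [/\ invariant_mon p b f, nonconstant f,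
              invariant_mon p b g, nonconstant g & e = mon_mul f g]].

From mathcomp Require Import all_boot zify.

Set Implicit Arguments.
Unset Strict Implicit.
Unset Printing Implicit Defensive.

(* Weigh x1^u x2^v by a u + c v with a, c > 0.  For (a, c) = (1, b) and for
   (a, c) = (b^-1, 1) the weight of every invariant monomial is a multiple of p
   (the latter weight is b^-1 (u + b v) mod p), and each listed monomial has
   weight exactly p, whereas a product of two nonconstant invariant monomials
   has weight at least 2p. *)

Definition mon_weight (a c : nat) (e : monomial) : nat := a * e.1 + c * e.2.

Lemma mon_weight_mul (a c : nat) (f g : monomial) :
  mon_weight a c (mon_mul f g) = mon_weight a c f + mon_weight a c g.
Proof. by rewrite /mon_weight /=; lia. Qed.

Lemma mon_weight_gt0 (a c : nat) (f : monomial) :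
  0 < a -> 0 < c -> nonconstant f -> 0 < mon_weight a c f.
Proof.
case: f => [[|f1] [|f2]] a_gt0 c_gt0 //= _; rewrite /mon_weight /=; nia.
Qed.

Lemma in_inv_weight (p b a c : nat) (e : monomial) :
  0 < p -> 0 < a -> 0 < c ->
  (forall f, invariant_mon p b f = (p %| mon_weight a c f)) ->
  mon_weight a c e = p -> in_inv p b e.
Proof.
move=> p_gt0 a_gt0 c_gt0 invE we_p; split.
- by rewrite invE we_p.
- by apply/eqP=> e0; move: we_p; rewrite e0 /mon_weight /=; lia.
case=> f [g [inv_f ncf inv_g ncg e_fg]].
have wf_gt0 := mon_weight_gt0 a_gt0 c_gt0 ncf.
have wg_gt0 := mon_weight_gt0 a_gt0 c_gt0 ncg.
have wf_ge : p <= mon_weight a c f by apply: dvdn_leq; rewrite // -invE.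
have wg_ge : p <= mon_weight a c g by apply: dvdn_leq; rewrite // -invE.
by move: we_p; rewrite e_fg mon_weight_mul; lia.
Qed.

Lemma invariant_monE (p b : nat) (f : monomial) :
  invariant_mon p b f = (p %| mon_weight 1 b f).
Proof. by rewrite /invariant_mon /dvdn /mon_weight mul1n. Qed.

Lemma invariant_monE_inv (p b binv : nat) (f : monomial) :
  b * binv %% p = 1 -> invariant_mon p b f = (p %| mon_weight binv 1 f).
Proof.
move=> bbinv1; have cop_p_binv : coprime p binv.
  move: (coprime1n p).
  by rewrite -bbinv1 coprime_modl coprimeMl => /andP[_]; rewrite coprime_sym.
rewrite invariant_monE -(Gauss_dvdr _ cop_p_binv) /dvdn /mon_weight mul1n.
by rewrite mulnDr mulnA (mulnC binv b) -modnDmr -modnMml bbinv1 mul1n modnDmr.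
Qed.

Theorem lemma3p7 (p b binv : nat) :
  prime p ->
  0 < binv < p -> b * binv %% p = 1 ->
  0 < b -> b <= binv ->
  forall e : monomial,
    (exists k, k <= p %/ b /\ e = (p - k * b, k)) \/
    (exists m, m <= p %/ binv /\ e = (m, p - m * binv)) ->
    in_inv p b e.
Proof.
move=> _ /andP[binv_gt0 binv_lt_p] bbinv1 b_gt0 _ e.
have p_gt0 : 0 < p by apply: leq_trans binv_lt_p.
case=> [[k [k_le -> {e}]] | [m [m_le -> {e}]]].
- apply: (in_inv_weight p_gt0 _ b_gt0 (@invariant_monE p b)) => //.
  by move: k_le; rewrite leq_divRL // /mon_weight /=; lia.
- apply: (in_inv_weight p_gt0 binv_gt0 _ (fun f => invariant_monE_inv f bbinv1)) => //.
  by move: m_le; rewrite leq_divRL // /mon_weight /=; lia.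
Qed.
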